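(* Let $a,c$ be nonzero constants, $N\ge1$, and $c_i,d_i,p_i,q_i,\xi_{i0},\eta_{i0}$ arbitrary real or complex parameters (with $p_i,q_i\neq0$, $1-ap_i,1-aq_i\neq0$). Define $$\phi^{(i)}_{n,m}(k)=c_ip_i^n(1-cp_i)^m(1-ap_i)^{-k}e^{\xi_i}+d_iq_i^n(1-cq_i)^m(1-aq_i)^{-k}e^{\eta_i},\quad \xi_i=p_i^{-1}x_{-1}+\xi_{i0},\ \eta_i=q_i^{-1}x_{-1}+\eta_{i0},$$ and $\tau_{n,m}(x_{-1},k)=\det(\phi^{(i)}_{n+j-1,m}(k))_{1\le i,j\le N}$; alternatively (with $p_i+q_j\neq0$, $1+aq_j\ne0$, $c_{ij}$ arbitrary constants, $\eta_j=q_j^{-1}x_{-1}+\eta_{j0}$) $$\tau_{n,m}(x_{-1},k)=\det\Big(c_{ij}+\frac{1}{p_i+q_j}\Big(-\frac{p_i}{q_j}\Big)^n\Big(\frac{1-cp_i}{1+cq_j}\Big)^m\Big(\frac{1-ap_i}{1+aq_j}\Big)^{-k}e^{\xi_i+\eta_j}\Big)_{1\le i,j\le N}.$$ Then for all integers $n,m,k$: $$\Big(\tfrac1aD_{x_{-1}}-1\Big)\tau_{n,m}(k+1)\cdot\tau_{n,m}(k)+\tau_{n+1,m}(k+1)\tau_{n-1,m}(k)=0,$$ $$\Big(\tfrac1cD_{x_{-1}}-1\Big)\tau_{n,m}(k)\cdot\tau_{n,m+1}(k)+\tau_{n+1,m}(k)\tau_{n-1,m+1}(k)=0.$$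
   Context: Hirota operator: $D_x\,a\cdot b=(\partial_x-\partial_{x'})a(x)b(x')|_{x'=x}=a_xb-ab_x$; the term ''$-1$'' acts as $-ab$. *)

From mathcomp Require Import all_boot all_order all_algebra.
From mathcomp Require Import all_classical all_reals all_analysis.
From mathcomp Require Export complex.
Import GRing.Theory Num.Theory.

Set Implicit Arguments. Unset Strict Implicit. Unset Printing Implicit Defensive.

Local Open Scope ring_scope.
Local Open Scope complex_scope.

Section Defs.
Variable R : realType.
Local Notation C := R[i].

Definition cexp (z : C) : C :=
  (expR (complex.Re z))%:C * (cos (complex.Im z) +i* sin (complex.Im z)).

Definition cderiv (f : R -> C) (x : R) : C :=
  derive1 (fun t => complex.Re (f t)) x +i* derive1 (fun t => complex.Im (f t)) x.

(* Hirota bilinear operator: (1/a D_x - 1) f . g = a^-1 (f_x g - f g_x) - f g *)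
Definition hirota (a : C) (f g : R -> C) (x : R) : C :=
  a^-1 * (cderiv f x * g x - f x * cderiv g x) - f x * g x.

Definition bilinear_pair (a c : C) (tau : int -> int -> int -> R -> C) : Prop :=
  forall (n m k : int) (x : R),
    hirota a (tau n m (k + 1)) (tau n m k) x
      + tau (n + 1) m (k + 1) x * tau (n - 1) m k x = 0
 /\ hirota c (tau n m k) (tau n (m + 1) k) x
      + tau (n + 1) m k x * tau (n - 1) (m + 1) k x = 0.

Variable N : nat.

Definition phi1 (a c : C) (ci di p q xi0 eta0 : 'I_N -> C)
  (i : 'I_N) (n m k : int) (x : R) : C :=
  ci i * p i ^ n * (1 - c * p i) ^ m * (1 - a * p i) ^ (- k)
    * cexp ((p i)^-1 * x%:C + xi0 i)
  + di i * q i ^ n * (1 - c * q i) ^ m * (1 - a * q i) ^ (- k)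
    * cexp ((q i)^-1 * x%:C + eta0 i).

(* tau_{n,m}(x,k) = det (phi^{(i)}_{n+j-1,m}(k))_{1<=i,j<=N};
   with 0-based j : 'I_N this is phi^{(i)}_{n+j,m}(k) *)
Definition tau1 (a c : C) (ci di p q xi0 eta0 : 'I_N -> C)
  (n m k : int) (x : R) : C :=
  \det (\matrix_(i < N, j < N) phi1 a c ci di p q xi0 eta0 i (n + (j : nat)%:Z) m k x).

Definition tau2 (a c : C) (cij : 'I_N -> 'I_N -> C) (p q xi0 eta0 : 'I_N -> C)
  (n m k : int) (x : R) : C :=
  \det (\matrix_(i < N, j < N)
    (cij i j + (p i + q j)^-1 * (- (p i / q j)) ^ n
       * ((1 - c * p i) / (1 + c * q j)) ^ m
       * ((1 - a * p i) / (1 + a * q j)) ^ (- k)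
       * cexp (((p i)^-1 * x%:C + xi0 i) + ((q j)^-1 * x%:C + eta0 j)))).

End Defs.

From mathcomp Require Import all_boot all_order all_algebra.
From mathcomp Require Import all_classical all_reals all_analysis.
From mathcomp Require Import complex.
From mathcomp Require Import perm ring.
Set Implicit Arguments. Unset Strict Implicit. Unset Printing Implicit Defensive.
Import GRing.Theory Num.Theory.
Local Open Scope ring_scope.
Local Open Scope complex_scope.

(* Both tau-functions are determinants, and each bilinear equation is an instance of the
   three-term Pluecker relation [x y][z v] - [x z][y v] + [x v][y z] = 0 between determinants
   that share all rows but two.
   Casorati solution: d/dx_{-1} lowers n by one, while phi(k) = phi(k+1) - a phi_{n+1}(k+1)
   and phi(m+1) = phi(m) - c phi_{n+1}(m). Triangular row operations rewrite all six
   determinants of an equation as brackets [_ _] over the middle rows W_1, ..., W_n of the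
   differences W_j = U_j - a U_{j+1}, with the outer rows chosen among four vectors.
   Gram solution: the derivative and the shifts multiply the Cauchy-like part of the entries
   by factors that split as rank-one updates, so every determinant of an equation is
   det (M + u1 x + u2 y) for x, y in one plane; bordering M by u1, u2 turns these into
   brackets of a bigger matrix and the Pluecker relation applies again. *)

Section RowReplacement.
Variables (F : fieldType) (n : nat).
Implicit Types (f g : 'I_n -> 'rV[F]_n) (r : 'rV[F]_n).

Definition mx_of_rows f : 'M[F]_n := \matrix_(i, j) f i 0 j.

Definition set_row f (i0 : 'I_n) r : 'I_n -> 'rV[F]_n :=
  fun i => if i == i0 then r else f i.

Definition det_set_row f (i0 : 'I_n) r := \det (mx_of_rows (set_row f i0 r)).

Lemma eq_mx_of_rows f g : f =1 g -> mx_of_rows f = mx_of_rows g.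
Proof. by move=> e; apply/matrixP=> i j; rewrite !mxE e. Qed.

Lemma row_mx_of_rows f i : row i (mx_of_rows f) = f i.
Proof. by apply/rowP=> j; rewrite !mxE. Qed.

Lemma mx_of_rowsK (A : 'M[F]_n) : mx_of_rows (fun i => row i A) = A.
Proof. by apply/matrixP => i j; rewrite !mxE. Qed.

Lemma det_set_row_cofactor f i0 r :
  det_set_row f i0 r = \sum_j r 0 j * cofactor (mx_of_rows f) i0 j.
Proof.
rewrite /det_set_row (expand_det_row _ i0); apply: eq_bigr => j _.
rewrite !mxE /set_row eqxx; congr (_ * _); rewrite !expand_cofactor.
apply: eq_bigr => s _; congr (_ * _); apply: eq_bigr => k.
by rewrite eq_sym => /negPf nk; rewrite !mxE /set_row nk.
Qed.

Lemma det_set_rowE f i0 r :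
  det_set_row f i0 r = (r *m \col_j cofactor (mx_of_rows f) i0 j) 0 0.
Proof. by rewrite det_set_row_cofactor mxE; apply: eq_bigr => j _; rewrite mxE. Qed.

Lemma det_set_rowD f i0 r r' :
  det_set_row f i0 (r + r') = det_set_row f i0 r + det_set_row f i0 r'.
Proof. by rewrite !det_set_rowE mulmxDl mxE. Qed.

Lemma det_set_rowZ f i0 c r : det_set_row f i0 (c *: r) = c * det_set_row f i0 r.
Proof. by rewrite !det_set_rowE -scalemxAl mxE. Qed.

Lemma det_set_rowN f i0 r : det_set_row f i0 (- r) = - det_set_row f i0 r.
Proof. by rewrite -scaleN1r det_set_rowZ mulN1r. Qed.

Lemma det_set_row_sum f i0 (c : 'I_n -> F) (rs : 'I_n -> 'rV[F]_n) :
  det_set_row f i0 (\sum_k c k *: rs k) = \sum_k c k * det_set_row f i0 (rs k).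
Proof.
rewrite det_set_rowE mulmx_suml summxE; apply: eq_bigr => k _.
by rewrite -scalemxAl mxE det_set_rowE.
Qed.

Lemma det_set_row_dup f i0 j : j != i0 -> det_set_row f i0 (f j) = 0.
Proof.
move=> ne; apply: (@determinant_alternate _ _ _ i0 j); first by rewrite eq_sym.
by move=> k; rewrite !mxE /set_row eqxx (negPf ne).
Qed.

Lemma det_set_row_id f i0 : det_set_row f i0 (f i0) = \det (mx_of_rows f).
Proof.
by congr (\det _); apply: eq_mx_of_rows => i; rewrite /set_row; case: eqP => // ->.
Qed.

(* Cramer's rule, read on rows: [z adj(A) A = det A z]. *)
Lemma scale_det_row_expansion (A : 'M[F]_n) (z : 'rV[F]_n) :
  \det A *: z = \sum_j det_set_row (fun i => row i A) j z *: row j A.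
Proof.
have -> : \det A *: z = z *m \adj A *m A by rewrite -mulmxA mul_adj_mx mul_mx_scalar.
rewrite mulmx_sum_row; apply: eq_bigr => j _; congr (_ *: _).
rewrite det_set_row_cofactor mx_of_rowsK mxE; apply: eq_bigr => i _; by rewrite mxE.
Qed.

End RowReplacement.

Section Bracket.
Variables (F : fieldType) (n : nat) (f : 'I_n -> 'rV[F]_n) (i0 i1 : 'I_n).
Hypothesis i01 : i0 != i1.
Implicit Types (p q x y z v : 'rV[F]_n).

Definition bracket p q := \det (mx_of_rows (set_row (set_row f i1 q) i0 p)).

Lemma bracketEl p q : bracket p q = det_set_row (set_row f i1 q) i0 p.
Proof. by []. Qed.

Lemma bracketEr p q : bracket p q = det_set_row (set_row f i0 p) i1 q.
Proof.
congr (\det _); apply: eq_mx_of_rows => i; rewrite /set_row.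
have [->|_] := eqVneq i i0; first by rewrite (negPf i01).
by case: (i == i1).
Qed.

Lemma bracketDl p p' q : bracket (p + p') q = bracket p q + bracket p' q.
Proof. by rewrite !bracketEl det_set_rowD. Qed.
Lemma bracketZl c p q : bracket (c *: p) q = c * bracket p q.
Proof. by rewrite !bracketEl det_set_rowZ. Qed.
Lemma bracketBl p p' q : bracket (p - p') q = bracket p q - bracket p' q.
Proof. by rewrite !bracketEl det_set_rowD det_set_rowN. Qed.
Lemma bracketDr p q q' : bracket p (q + q') = bracket p q + bracket p q'.
Proof. by rewrite !bracketEr det_set_rowD. Qed.
Lemma bracketZr c p q : bracket p (c *: q) = c * bracket p q.
Proof. by rewrite !bracketEr det_set_rowZ. Qed.
Lemma bracketBr p q q' : bracket p (q - q') = bracket p q - bracket p q'.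
Proof. by rewrite !bracketEr det_set_rowD det_set_rowN. Qed.

Lemma bracket_diag p : bracket p p = 0.
Proof.
apply: (@determinant_alternate _ _ _ i0 i1) => // k.
by rewrite !mxE /set_row !eqxx eq_sym (negPf i01).
Qed.

Lemma bracketC p q : bracket q p = - bracket p q.
Proof.
have := bracket_diag (p + q); rewrite bracketDl !bracketDr !bracket_diag add0r addr0.
by move/eqP; rewrite addr_eq0 => /eqP ->; rewrite opprK.
Qed.

Lemma bracket_row j q : j != i0 -> j != i1 -> bracket (f j) q = 0.
Proof.
move=> h0 h1; rewrite bracketEl.
have -> : f j = set_row f i1 q j by rewrite /set_row (negPf h1).
exact: det_set_row_dup.
Qed.

(* Expand [z] in the rows of the matrix with rows [x], [y] and pair the expansion
   with the linear form [bracket _ v]; only the coefficients of [x] and [y] survive. *)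
Lemma pluecker x y z v :
  bracket x y * bracket z v - bracket x z * bracket y v + bracket x v * bracket y z = 0.
Proof.
set A := mx_of_rows (set_row (set_row f i1 y) i0 x).
have i10 : i1 != i0 by rewrite eq_sym.
have := congr1 (det_set_row (set_row f i1 v) i0) (scale_det_row_expansion A z).
rewrite det_set_rowZ det_set_row_sum -!bracketEl.
rewrite (bigD1 i0) //= (bigD1 i1) //= big1 ?addr0; last first.
  move=> j /andP [h1 h0]; rewrite /A row_mx_of_rows /set_row (negPf h1) (negPf h0).
  by rewrite -bracketEl bracket_row // mulr0.
have r0 : row i0 A = x by rewrite /A row_mx_of_rows /set_row eqxx.
have r1 : row i1 A = y by rewrite /A row_mx_of_rows /set_row (negPf i10) eqxx.
have c0 : det_set_row (fun i => row i A) i0 z = bracket z y.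
  congr (\det _); apply: eq_mx_of_rows => i.
  by rewrite /A /set_row row_mx_of_rows /set_row; case: eqP.
have c1 : det_set_row (fun i => row i A) i1 z = bracket x z.
  congr (\det _); apply: eq_mx_of_rows => i.
  rewrite /A /set_row row_mx_of_rows /set_row.
  by case: (eqVneq i i1) => [->|//]; rewrite (negPf i10).
rewrite r0 r1 c0 c1 -!bracketEl (bracketC y z) => ->; ring.
Qed.

End Bracket.

Section RankUpdates.
Variable F : fieldType.

Lemma det_add_row_multiples n (g : 'I_n -> 'rV[F]_n) (j0 : 'I_n) (c : 'I_n -> F) :
  c j0 = 0 -> \det (mx_of_rows (fun i => g i + c i *: g j0)) = \det (mx_of_rows g).
Proof.
move=> cj0.
pose G k (i : 'I_n) := if (i < k)%N then g i + c i *: g j0 else g i.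
have Gj0 k : G k j0 = g j0 by rewrite /G; case: ifP; rewrite ?cj0 ?scale0r ?addr0.
suff step k : (k <= n)%N -> \det (mx_of_rows (G k)) = \det (mx_of_rows g).
  rewrite -(step n) //; congr (\det _); apply: eq_mx_of_rows => i.
  by rewrite /G ltn_ord.
elim: k => [|k IH] Hk; first by congr (\det _); apply: eq_mx_of_rows.
set kk := Ordinal Hk.
have -> : mx_of_rows (G k.+1) = mx_of_rows (set_row (G k) kk (G k kk + c kk *: G k j0)).
  apply: eq_mx_of_rows => i; rewrite Gj0 /set_row /G.
  have [->|nik] := eqVneq i kk; first by rewrite /= ltnSn ltnn.
  by rewrite ltnS leq_eqVlt -[(i : nat) == k]/(i == kk) (negPf nik).
rewrite -/(det_set_row (G k) kk _) det_set_rowD det_set_rowZ det_set_row_id.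
have [e|ne] := eqVneq j0 kk.
  by rewrite -e cj0 mul0r addr0; apply: IH; apply: ltnW.
by rewrite det_set_row_dup // mulr0 addr0; apply: IH; apply: ltnW.
Qed.

Lemma det_add_rank1 n (M : 'M[F]_n) (u : 'cV[F]_n) (v : 'rV[F]_n) :
  \det (M + u *m v) = \det M + \sum_i u i 0 * det_set_row (fun i => row i M) i v.
Proof.
pose G k (i : 'I_n) := if (i < k)%N then row i M + u i 0 *: v else row i M.
suff step k : (k <= n)%N -> \det (mx_of_rows (G k))
    = \det M + \sum_(i : 'I_n | (i < k)%N) u i 0 * det_set_row (fun i => row i M) i v.
  have -> : M + u *m v = mx_of_rows (G n).
    by apply/matrixP => i j; rewrite !mxE /G ltn_ord big_ord1 !mxE.
  by rewrite step //; congr (_ + _); apply: eq_bigl => i; rewrite ltn_ord.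
elim: k => [|k IH] Hk.
  rewrite big_pred0 // addr0 -[in RHS](mx_of_rowsK M).
  by congr (\det _); apply: eq_mx_of_rows.
set kk := Ordinal Hk.
have -> : mx_of_rows (G k.+1) = mx_of_rows (set_row (G k) kk (G k kk + u kk 0 *: v)).
  apply: eq_mx_of_rows => i; rewrite /set_row /G.
  have [->|nik] := eqVneq i kk; first by rewrite /= ltnSn ltnn.
  by rewrite ltnS leq_eqVlt -[(i : nat) == k]/(i == kk) (negPf nik).
rewrite -/(det_set_row (G k) kk _) det_set_rowD det_set_rowZ det_set_row_id IH; last exact: ltnW.
have -> : det_set_row (G k) kk v = det_set_row (fun i => row i M) kk v.
  rewrite /det_set_row -(@det_add_row_multiples n (set_row (fun i => row i M) kk v) kk
    (fun i => if (i < k)%N then u i 0 else 0)) /= ?ltnn //.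
  congr (\det _); apply: eq_mx_of_rows => i.
  rewrite /set_row /G; have [->|nik] := eqVneq i kk; first by rewrite /= ltnn scale0r addr0.
  by rewrite eqxx; case: ifP => _; rewrite ?scale0r ?addr0.
rewrite [in RHS](bigD1 kk) /= ?ltnSn // -addrA; congr (_ + _); rewrite addrC; congr (_ + _).
apply: eq_bigl => i; rewrite ltnS.
have [->|nik] := eqVneq i kk; first by rewrite /= ltnn andbF.
by rewrite andbT ltn_neqAle -[(i : nat) == k]/(i == kk) nik.
Qed.

Lemma det_block_schur m k (M : 'M[F]_m) (U : 'M[F]_(m, k)) (V : 'M[F]_(k, m)) :
  \det (block_mx M U V 1%:M) = \det (M - U *m V).
Proof.
have -> : block_mx M U V 1%:M
   = block_mx 1%:M U 0 1%:M *m block_mx (M - U *m V) 0 V 1%:M.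
  by rewrite mulmx_block ?mul1mx ?mul0mx ?mulmx0 ?mulmx1 ?add0r ?addr0 ?subrK.
by rewrite det_mulmx det_ublock det_lblock !det1 !mul1r mulr1.
Qed.

End RankUpdates.

Section BorderedDeterminant.
Variables (F : fieldType) (N : nat) (M : 'M[F]_N) (u1 u2 : 'cV[F]_N).

Let f := fun i : 'I_(N + 2) => row i (block_mx M (row_mx u1 u2) 0 1%:M).
Let i0 : 'I_(N + 2) := rshift N (0 : 'I_2).
Let i1 : 'I_(N + 2) := rshift N (1 : 'I_2).
Let i01 : i0 != i1. Proof. by rewrite eq_rshift. Qed.
Let e1 : 'rV[F]_2 := delta_mx 0 0.
Let e2 : 'rV[F]_2 := delta_mx 0 1.

Definition det_update2 (x y : 'rV[F]_N) := \det (M + u1 *m x + u2 *m y).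

(* Bordering [M] by the columns [u1], [u2] turns the rank-two update into a bracket,
   so that [det_update2] inherits the Pluecker relation. *)
Lemma bracket_bordered x y :
  bracket f i0 i1 (row_mx x e1) (row_mx y e2) = \det (M - u1 *m x - u2 *m y).
Proof.
rewrite /bracket.
have -> : mx_of_rows (set_row (set_row f i1 (row_mx y e2)) i0 (row_mx x e1))
    = block_mx M (row_mx u1 u2) (col_mx x y) 1%:M.
  apply/matrixP => i j; rewrite mxE /set_row.
  rewrite -(splitK i); case: (fintype.split i) => [i'|k] /=.
    by rewrite !eq_lrshift /f !mxE (unsplitK (inl _ i')).
  rewrite /f !eq_rshift !mxE (unsplitK (inr _ k)).
  pose k' : 'I_(1 + 1) := k; change k with k'.
  rewrite -(splitK k'); case: (fintype.split k') => [k0|k1] /=; rewrite ?ord1 /= !mxE.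
    case: (fintype.split j) => [j'|j'] /=; first by rewrite col_mxEu.
    by rewrite !mxE eqxx /=; congr (_%:R); rewrite -!val_eqE /= eq_sym.
  case: (fintype.split j) => [j'|j'] /=; first by rewrite col_mxEd.
  by rewrite !mxE eqxx /=; congr (_%:R); rewrite -!val_eqE /= eq_sym.
by rewrite det_block_schur (mul_row_col u1 u2 x y) opprD addrA.
Qed.

Lemma det_update2_pluecker (b d : 'rV[F]_N) : exists E P1 P2 S1 S2 Z : F,
  (forall x1 x2 y1 y2, det_update2 (x1 *: b + x2 *: d) (y1 *: b + y2 *: d)
     = E - (y1 * P1 + y2 * P2) - (x1 * S1 + x2 * S2) + (x1 * y2 - x2 * y1) * Z)
  /\ E * Z + P1 * S2 - P2 * S1 = 0.
Proof.
pose E1 : 'rV[F]_(N + 2) := row_mx 0 e1.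
pose E2 : 'rV[F]_(N + 2) := row_mx 0 e2.
pose bb : 'rV[F]_(N + 2) := row_mx b 0.
pose dd : 'rV[F]_(N + 2) := row_mx d 0.
pose B := bracket f i0 i1.
exists (B E1 E2), (B E1 bb), (B E1 dd), (B bb E2), (B dd E2), (B bb dd); split.
  move=> x1 x2 y1 y2; rewrite /det_update2.
  have -> : M + u1 *m (x1 *: b + x2 *: d) + u2 *m (y1 *: b + y2 *: d)
      = M - u1 *m (- (x1 *: b + x2 *: d)) - u2 *m (- (y1 *: b + y2 *: d)).
    by rewrite !mulmxN !opprK.
  rewrite -bracket_bordered.
  have row_split z1 z2 (e : 'rV[F]_2) :
      row_mx (- (z1 *: b + z2 *: d)) e = row_mx 0 e - (z1 *: bb + z2 *: dd).
    rewrite /bb /dd !scale_row_mx !add_row_mx opp_row_mx add_row_mx.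
    by rewrite !scaler0 !addr0 sub0r subr0.
  rewrite !row_split /B -/E1 -/E2 bracketBl !(bracketBr f i01) !bracketDl.
  rewrite !(bracketDr f i01) !bracketZl !(bracketZr f i01) !(bracket_diag f i01).
  rewrite (bracketC f i01 bb dd); ring.
have := pluecker f i01 E1 E2 bb dd.
rewrite (bracketC f i01 dd E2) (bracketC f i01 bb E2) -/B => h.
by rewrite -[RHS]h; ring.
Qed.

Lemma det_update2E (M' : 'M[F]_N) (b d : 'rV[F]_N) x1 x2 y1 y2 :
  (forall i j, M' i j = M i j + u1 i 0 * (x1 * b 0 j + x2 * d 0 j)
                        + u2 i 0 * (y1 * b 0 j + y2 * d 0 j)) ->
  \det M' = det_update2 (x1 *: b + x2 *: d) (y1 *: b + y2 *: d).
Proof.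
move=> e; congr (\det _); apply/matrixP => i j.
by rewrite e !mxE !big_ord1 !mxE.
Qed.

End BorderedDeterminant.

Section Bidiagonal.
Variable F : fieldType.

(* The rows are transformed by the one-sided triangular matrix [d i (i = k) + c i (k = s i)]. *)
Lemma det_bidiagonal_rows n (A : 'M[F]_n) (d c : 'I_n -> F) (s : 'I_n -> 'I_n) :
  (forall i, c i != 0 -> (s i < i)%N) \/ (forall i, c i != 0 -> (i < s i)%N) ->
  \det (\matrix_(i, j) (d i * A i j + c i * A (s i) j)) = (\prod_i d i) * \det A.
Proof.
move=> one_sided.
pose L := \matrix_(i, k) (d i * (k == i)%:R + c i * (k == s i)%:R).
have sum_delta (i0 : 'I_n) (e : F) (G : 'I_n -> F) : \sum_k e * (k == i0)%:R * G k = e * G i0.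
  by rewrite (bigD1 i0) //= eqxx mulr1 big1 ?addr0 // => k /negPf ->; rewrite mulr0 mul0r.
have -> : \matrix_(i, j) (d i * A i j + c i * A (s i) j) = L *m A.
  apply/matrixP => i j; rewrite !mxE; under eq_bigr do rewrite !mxE mulrDl.
  by rewrite big_split /= !sum_delta.
have si_neq i : c i != 0 -> s i != i.
  by move=> ci; case: one_sided => /(_ i ci); rewrite neq_ltn => ->; rewrite ?orbT.
have Ldiag i : L i i = d i.
  rewrite !mxE eqxx mulr1; have [->|ci] := eqVneq (c i) 0; first by rewrite mul0r addr0.
  by rewrite eq_sym (negPf (si_neq i ci)) mulr0 addr0.
rewrite det_mulmx; congr (_ * _).
case: one_sided => hs.
  rewrite det_trig; first by apply: eq_bigr => i _; rewrite Ldiag.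
  apply/is_trig_mxP => i j ij; rewrite !mxE -!val_eqE /= (gtn_eqF ij) mulr0 add0r.
  have [->|ci] := eqVneq (c i) 0; first by rewrite mul0r.
  by rewrite (gtn_eqF (ltn_trans (hs i ci) ij)) mulr0.
rewrite -det_tr det_trig; first by apply: eq_bigr => i _; rewrite mxE Ldiag.
apply/is_trig_mxP => i j ij; rewrite !mxE -!val_eqE /= (ltn_eqF ij) mulr0 add0r.
have [->|cj] := eqVneq (c j) 0; first by rewrite mul0r.
by rewrite (ltn_eqF (ltn_trans ij (hs j cj))) mulr0.
Qed.

End Bidiagonal.

Definition casorati (F : fieldType) n (V : int -> 'rV[F]_n) :=
  \det (mx_of_rows (fun i : 'I_n => V (i : nat)%:Z)).

(* The x_{-1}-derivative of [casorati V] when d/dx V j = V (j - 1). *)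
Definition casorati_low (F : fieldType) n (V : int -> 'rV[F]_n.+1) :=
  \det (mx_of_rows (set_row (fun i : 'I_n.+1 => V (i : nat)%:Z) ord0 (V (-1)))).

Lemma natz_add1 (k : nat) : k%:Z + 1 = k.+1%:Z.
Proof. by rewrite -addn1 PoszD. Qed.

Section CasoratiBracket.
Variables (F : fieldType) (n : nat) (a : F) (U : int -> 'rV[F]_n.+2).
Hypothesis a0 : a != 0.
Local Notation N := n.+2.
Definition shift_diff (j : int) := U j - a *: U (j + 1).
Local Notation W := shift_diff.
Local Notation fW := (fun i : 'I_N => W (i : nat)%:Z).
Local Notation brc := (bracket fW ord0 ord_max).

Let ord0_max : (ord0 : 'I_N) != ord_max. Proof. by rewrite -val_eqE. Qed.

Let inner (i : 'I_N) := (0 < i < n.+1)%N.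

Let innerN (i : 'I_N) : i != ord0 -> i != ord_max -> inner i.
Proof.
rewrite /inner -!val_eqE /= lt0n => -> /=.
by rewrite ltn_neqAle -ltnS ltn_ord andbT.
Qed.

Let set_row_id (g : 'I_N -> 'rV[F]_N) i0 : set_row g i0 (g i0) = g.
Proof. by apply: funext => i; rewrite /set_row; case: eqP => // ->. Qed.

Lemma casorati_set_first p :
  \det (mx_of_rows (set_row (fun i : 'I_N => U (i : nat)%:Z) ord0 p)) = brc p (U n.+1%:Z).
Proof.
pose s (i : 'I_N) : 'I_N := inord i.+1.
have s_val (i : 'I_N) : inner i -> (s i : nat) = i.+1.
  by case/andP=> _ i_lt; rewrite inordK // ltnS.
have := @det_bidiagonal_rows _ _ (mx_of_rows (set_row (fun i : 'I_N => U (i : nat)%:Z) ord0 p))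
  (fun=> 1) (fun i => if inner i then - a else 0) s.
rewrite big1_eq mul1r => <-; last first.
  by right=> i; case: ifP => [/s_val -> _|]; rewrite ?eqxx.
rewrite /bracket; congr (\det _); apply/matrixP => i j; rewrite !mxE /set_row.
have [->|i0] := eqVneq i ord0; first by rewrite /inner /= mul1r mul0r addr0.
have [->|im] := eqVneq i ord_max.
  by rewrite /inner /= ltnn mul1r mul0r addr0.
have i_in := innerN i0 im; rewrite i_in.
have -> : (s i == ord0) = false by rewrite -val_eqE /= s_val.
by rewrite s_val // -natz_add1 !mxE mul1r mulNr.
Qed.

Let prod_inner (x : F) : \prod_(i < N) (if inner i then x else 1) = x ^+ n.
Proof.
rewrite big_ord_recl big_ord_recr /= /inner /= ltnn mul1r mulr1.
have -> : x ^+ n = \prod_(i < n) x by rewrite prodr_const card_ord.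
apply: eq_bigr => i _.
by rewrite /bump /= add1n ltnS ltn_ord.
Qed.

Lemma bracket_shift_set_last q :
  brc (U 1) q
  = (-a) ^+ n * \det (mx_of_rows (set_row (fun i : 'I_N => U ((i : nat)%:Z + 1)) ord_max q)).
Proof.
pose s (i : 'I_N) : 'I_N := inord i.-1.
have s_val (i : 'I_N) : (s i : nat) = i.-1.
  by rewrite inordK // (leq_ltn_trans (leq_pred i)).
rewrite -(prod_inner (- a)); have <- := @det_bidiagonal_rows _ _
  (mx_of_rows (set_row (fun i : 'I_N => U ((i : nat)%:Z + 1)) ord_max q))
  (fun i => if inner i then - a else 1) (fun i => if inner i then 1 else 0) s.
  rewrite /bracket; congr (\det _); apply/matrixP => i j; rewrite !mxE /set_row.
  have [->|i0] := eqVneq i ord0; first by rewrite /inner /= mul1r mul0r addr0.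
  have [->|im] := eqVneq i ord_max; first by rewrite /inner /= ltnn mul1r mul0r addr0.
  have /andP [i_gt0 i_lt] := innerN i0 im; rewrite /inner i_gt0 i_lt /=.
  have -> : (s i == ord_max) = false.
    by rewrite -val_eqE /= s_val ltn_eqF // (leq_ltn_trans (leq_pred i)).
  by rewrite s_val (natz_add1 i.-1) (prednK i_gt0) !mxE mulNr mul1r addrC.
left=> i; case: ifP => [/andP [i_gt0 _] _|]; last by rewrite eqxx.
by rewrite s_val prednK.
Qed.
Lemma bracket_U_descend q k : (k <= n)%N ->
  brc (U (n.+1 - k)%N%:Z) q = a ^+ k * brc (U n.+1%:Z) q.
Proof.
elim: k => [|k IH] kn; first by rewrite subn0 expr0 mul1r.
set j := (n.+1 - k.+1)%N.
have j_gt0 : (0 < j)%N by rewrite /j subSS subn_gt0.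
have j_lt : (j < n.+1)%N by rewrite /j subSS ltnS leq_subr.
have j_val : ((inord j : 'I_N) : nat) = j by rewrite inordK // ltnS ltnW.
have -> : U j%:Z = fW (inord j) + a *: U (j%:Z + 1) by rewrite j_val subrK.
have j_succ : j.+1 = (n.+1 - k)%N by rewrite /j subSS subSn // ltnW.
rewrite bracketDl bracketZl (natz_add1 j) j_succ IH ?(ltnW kn) // exprS mulrA.
rewrite bracket_row ?add0r // -val_eqE /= j_val; first by rewrite -lt0n.
by rewrite ltn_eqF.
Qed.

(* The rows [W (-1), W 0, ..., W n] are those of the bracket matrix
   [W (-1), W 1, ..., W n, W 0] up to a cycle of length [n + 1]. *)
Lemma casorati_W_pred :
  casorati (fun j => W (j - 1)) = (-1) ^+ n * brc (W (-1)) (W 0).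
Proof.
pose s : 'S_N := lift_perm (inord 1) ord_max 1.
have v1 : ((inord 1 : 'I_N) : nat) = 1%N by rewrite inordK.
rewrite /casorati.
have -> : mx_of_rows (fun i : 'I_N => W ((i : nat)%:Z - 1))
    = row_perm s (mx_of_rows (set_row (set_row fW ord_max (W 0)) ord0 (W (-1)))).
  apply/matrixP => i j; rewrite !mxE /s.
  case: (unliftP (inord 1) i) => [k ->|->]; last first.
    by rewrite lift_perm_id v1 /set_row /= eqxx !mxE subrr add0r.
  rewrite lift_perm_lift perm1 /set_row.
  have [->|k0] := eqVneq k ord0.
    have -> : lift (inord 1) (ord0 : 'I_n.+1) = ord0 :> 'I_N.
      by apply/val_inj; rewrite /= /bump v1.
    have -> : lift ord_max (ord0 : 'I_n.+1) = ord0 :> 'I_N by apply/val_inj.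
    by rewrite eqxx !mxE sub0r.
  have k_gt0 : (0 < k)%N by rewrite lt0n -[(k : nat) == 0%N]/(k == ord0) k0.
  have vl : ((lift (inord 1) k : 'I_N) : nat) = k.+1.
    by rewrite /= /bump v1 k_gt0 add1n.
  have vm : ((lift ord_max k : 'I_N) : nat) = k.
    by rewrite /= /bump /= leqNgt ltn_ord.
  have -> : (lift ord_max k == ord0 :> 'I_N) = false.
    by apply/negbTE/eqP => /(congr1 (@nat_of_ord N)); rewrite vm => k_eq0; rewrite k_eq0 in k_gt0.
  have -> : (lift ord_max k == ord_max :> 'I_N) = false.
    apply/negbTE/eqP => /(congr1 (@nat_of_ord N)); rewrite vm => km.
    by have := ltn_ord k; rewrite km ltnn.
  by rewrite vm vl -natz_add1 addrK !mxE.
rewrite row_permE det_mulmx det_perm odd_lift_perm odd_perm1 v1 /= addbF.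
by rewrite negbK signr_odd.
Qed.

Lemma casorati_bilinear_bracket :
  a^-1 * (casorati_low U * casorati (fun j => W j) - casorati U * casorati_low (fun j => W j))
    - casorati U * casorati (fun j => W j)
    + casorati (fun j => U (j + 1)) * casorati (fun j => W (j - 1)) = 0.
Proof.
set z := U n.+1%:Z; set v := U n.+2%:Z; set x := W (-1); set y := W 0.
have U1 q : brc (U 1) q = a ^+ n * brc z q.
  by have := bracket_U_descend q (leqnn n); rewrite subSnn.
have UW j : U j = W j + a *: U (j + 1) by rewrite /shift_diff subrK.
have Wmax : W n.+1%:Z = z - a *: v by rewrite /shift_diff natz_add1.
have diag p : brc p p = 0 := bracket_diag fW ord0_max p.
have sign2 : (-1) ^+ n * (-1) ^+ n = 1 :> F by rewrite -exprMn mulrNN mulr1 expr1n.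
have tauU : casorati U = brc y z.
  rewrite /casorati -[in LHS](set_row_id (fun i : 'I_N => U (i : nat)%:Z) ord0).
  rewrite casorati_set_first -/z (UW 0) bracketDl bracketZl U1 diag.
  by rewrite !mulr0 addr0.
have tauU_low : casorati_low U = brc x z + a * brc y z.
  rewrite /casorati_low casorati_set_first -/z (UW (-1)) (_ : -1 + 1 = 0) // (UW 0).
  by rewrite bracketDl bracketZl bracketDl bracketZl U1 diag !mulr0 addr0.
have tauW : casorati (fun j => W j) = brc y z - a * brc y v.
  rewrite -(bracketZr fW ord0_max) -(bracketBr fW ord0_max) -Wmax /casorati /bracket.
  congr (\det _).
  apply: eq_mx_of_rows => i; rewrite /set_row.
  by case: (eqVneq i ord0) => [->//|_]; case: (eqVneq i ord_max) => [->//|_].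
have tauW_low : casorati_low (fun j => W j) = brc x z - a * brc x v.
  rewrite -(bracketZr fW ord0_max) -(bracketBr fW ord0_max) -Wmax /casorati_low /bracket.
  congr (\det _).
  apply: eq_mx_of_rows => i; rewrite /set_row.
  by case: (eqVneq i ord0) => [//|_]; case: (eqVneq i ord_max) => [->//|_].
have tauU_shift : casorati (fun j => U (j + 1)) = (-1) ^+ n * brc z v.
  apply: (mulfI (expf_neq0 n a0)); rewrite mulrCA -U1 bracket_shift_set_last.
  rewrite mulrA -exprMn mulN1r opprK; congr (_ * \det _); apply: eq_mx_of_rows => i.
  by rewrite /set_row; case: (eqVneq i ord_max) => [->|_] //=; rewrite natz_add1.
rewrite tauU tauU_low tauW tauW_low tauU_shift casorati_W_pred.
rewrite mulrACA sign2 mul1r -[RHS](pluecker fW ord0_max x y z v).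
by field.
Qed.

End CasoratiBracket.

Lemma casorati_bilinear (F : fieldType) n (a : F) (U : int -> 'rV[F]_n.+1) : a != 0 ->
  let W j := U j - a *: U (j + 1) in
  a^-1 * (casorati_low U * casorati W - casorati U * casorati_low W)
    - casorati U * casorati W + casorati (fun j => U (j + 1)) * casorati (fun j => W (j - 1)) = 0.
Proof.
case: n U => [|n] U a0 W; last exact: casorati_bilinear_bracket.
rewrite /casorati_low /casorati !det_mx11 !mxE /set_row /= /W ?mxE sub0r.
by rewrite (_ : -1 + 1 = 0) //; field.
Qed.

Section ComplexDerivative.
Variable R : realType.
Local Notation C := R[i].
Implicit Types (f g : R -> C) (x : R).

Let ReD (z w : C) : complex.Re (z + w) = complex.Re z + complex.Re w.
Proof. by case: z; case: w. Qed.
Let ImD (z w : C) : complex.Im (z + w) = complex.Im z + complex.Im w.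
Proof. by case: z; case: w. Qed.
Let ReM (z w : C) :
  complex.Re (z * w) = complex.Re z * complex.Re w - complex.Im z * complex.Im w.
Proof. by case: z => a b; case: w => c d. Qed.
Let ImM (z w : C) :
  complex.Im (z * w) = complex.Re z * complex.Im w + complex.Im z * complex.Re w.
Proof. by case: z => a b; case: w => c d. Qed.
Let scaleRE (a b : R) : a *: b = a * b. Proof. by []. Qed.

Definition is_cderive f x (d : C) :=
  is_derive x (1 : R) (fun t => complex.Re (f t)) (complex.Re d) /\
  is_derive x (1 : R) (fun t => complex.Im (f t)) (complex.Im d).

Lemma cderive_val f x d : is_cderive f x d -> cderiv f x = d.
Proof. by case=> h1 h2; rewrite /cderiv !derive1E !derive_val; case: d {h1 h2}. Qed.

Lemma is_cderive_ext f g x d : f =1 g -> is_cderive f x d -> is_cderive g x d.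
Proof. by move=> /funext ->. Qed.

Lemma is_cderive_eq f x d d' : d = d' -> is_cderive f x d -> is_cderive f x d'.
Proof. by move=> ->. Qed.

Lemma is_cderive_cst (c : C) x : is_cderive (fun=> c) x 0.
Proof. by split; apply: is_derive_cst. Qed.

Lemma is_cderiveD f g x df dg : is_cderive f x df -> is_cderive g x dg ->
  is_cderive (fun t => f t + g t) x (df + dg).
Proof.
case=> f1 f2 [g1 g2]; split.
  have -> : (fun t => complex.Re (f t + g t))
     = (fun t => complex.Re (f t)) + (fun t => complex.Re (g t)).
    by apply: funext => t; rewrite ReD.
  by rewrite ReD; apply: is_deriveD.
have -> : (fun t => complex.Im (f t + g t))
   = (fun t => complex.Im (f t)) + (fun t => complex.Im (g t)).
  by apply: funext => t; rewrite ImD.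
by rewrite ImD; apply: is_deriveD.
Qed.

Lemma is_cderiveM f g x df dg : is_cderive f x df -> is_cderive g x dg ->
  is_cderive (fun t => f t * g t) x (df * g x + f x * dg).
Proof.
case=> f1 f2 [g1 g2]; split.
  have -> : (fun t => complex.Re (f t * g t))
     = (fun t => complex.Re (f t)) * (fun t => complex.Re (g t))
       - (fun t => complex.Im (f t)) * (fun t => complex.Im (g t)).
    by apply: funext => t; rewrite ReM.
  apply: (is_derive_eq (is_deriveB (is_deriveM f1 g1) (is_deriveM f2 g2))).
  by rewrite ReD !ReM /= !scaleRE; ring.
have -> : (fun t => complex.Im (f t * g t))
   = (fun t => complex.Re (f t)) * (fun t => complex.Im (g t))
     + (fun t => complex.Im (f t)) * (fun t => complex.Re (g t)).
  by apply: funext => t; rewrite ImM.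
apply: (is_derive_eq (is_deriveD (is_deriveM f1 g2) (is_deriveM f2 g1))).
by rewrite ImD !ImM /= !scaleRE; ring.
Qed.

Let is_derive_affine_comp (h dh : R -> R) (al be x : R) :
  (forall y, is_derive y (1 : R) h (dh y)) ->
  is_derive x (1 : R) (fun t => h (al * t + be)) (dh (al * x + be) * al).
Proof.
move=> hd; apply: (is_derive1_comp (hd _)).
have -> : (fun t : R => al * t + be) = al \*: (@id R) + cst be by apply: funext.
apply: (is_derive_eq (is_deriveD (is_deriveZ al (is_derive_id x 1)) (is_derive_cst be x 1))).
by rewrite addr0 scaleRE mulr1.
Qed.

Lemma is_cderive_cexp (al be : C) x :
  is_cderive (fun t => cexp (al * t%:C + be)) x (al * cexp (al * x%:C + be)).
Proof.
case: al => ar ai; case: be => br bi.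
have eR t : complex.Re (cexp ((ar +i* ai) * t%:C + (br +i* bi)))
    = expR (ar * t + br) * cos (ai * t + bi).
  by rewrite /cexp /= !mulr0 subr0 add0r mul0r subr0.
have eI t : complex.Im (cexp ((ar +i* ai) * t%:C + (br +i* bi)))
    = expR (ar * t + br) * sin (ai * t + bi).
  by rewrite /cexp /= !mulr0 subr0 add0r mul0r addr0.
have dE := @is_derive_affine_comp expR expR ar br x (@is_derive_expR R).
have dC := @is_derive_affine_comp cos (fun y => - sin y) ai bi x (@is_derive_cos R).
have dS := @is_derive_affine_comp sin cos ai bi x (@is_derive_sin R).
split.
  rewrite (funext eR); apply: (is_derive_eq (is_deriveM dE dC)).
  by rewrite ReM eR eI /= !scaleRE; ring.
rewrite (funext eI); apply: (is_derive_eq (is_deriveM dE dS)).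
by rewrite ImM eR eI /= !scaleRE; ring.
Qed.

Lemma is_cderive_sum (I : Type) (r : seq I) (G : I -> R -> C) (d : I -> C) x :
  (forall i, is_cderive (G i) x (d i)) ->
  is_cderive (fun t => \sum_(i <- r) G i t) x (\sum_(i <- r) d i).
Proof.
move=> h; elim: r => [|i r IH].
  by apply: (@is_cderive_ext (fun=> 0)) => [t|]; rewrite ?big_nil //; apply: is_cderive_cst.
rewrite big_cons; apply: (@is_cderive_ext (fun t => G i t + \sum_(j <- r) G j t)).
  by move=> t; rewrite big_cons.
exact: is_cderiveD.
Qed.

Lemma is_cderive_prod (I : eqType) (r : seq I) (G : I -> R -> C) (d : I -> C) x :
  uniq r -> (forall i, is_cderive (G i) x (d i)) ->
  is_cderive (fun t => \prod_(i <- r) G i t) x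
     (\sum_(k <- r) \prod_(i <- r) (if i == k then d i else G i x)).
Proof.
move=> + h; elim: r => [|i0 r IH] /=.
  move=> _; apply: (@is_cderive_ext (fun=> 1)) => [t|]; first by rewrite big_nil.
  by rewrite big_nil; apply: is_cderive_cst.
case/andP=> i0r ur.
apply: (@is_cderive_ext (fun t => G i0 t * \prod_(i <- r) G i t)).
  by move=> t; rewrite big_cons.
apply: is_cderive_eq (is_cderiveM (h i0) (IH ur)).
rewrite big_cons big_cons eqxx; congr (_ * _ + _).
  apply: eq_big_seq => i ir.
  by have -> : (i == i0) = false by apply/negbTE; apply: contraNneq i0r => <-.
rewrite big_distrr /=; apply: eq_big_seq => k kr; rewrite big_cons.
by have -> : (i0 == k) = false by apply/negbTE; apply: contraNneq i0r => ->.
Qed.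

Lemma is_cderive_det n (G : R -> 'M[C]_n) (G' : 'M[C]_n) x :
  (forall i j, is_cderive (fun t => G t i j) x (G' i j)) ->
  is_cderive (fun t => \det (G t)) x
     (\sum_r det_set_row (fun i => row i (G x)) r (row r G')).
Proof.
move=> h.
have hs (s : 'S_n) : is_cderive (fun t => (-1) ^+ s * \prod_i G t i (s i)) x
    ((-1) ^+ s * \sum_k \prod_i (if i == k then G' i (s i) else G x i (s i))).
  apply: is_cderive_eq; last first.
    apply: is_cderiveM; first exact: is_cderive_cst.
    exact: (@is_cderive_prod _ (index_enum 'I_n) (fun i t => G t i (s i))
              (fun i => G' i (s i)) x (index_enum_uniq _) (fun i => h i (s i))).
  by rewrite mul0r add0r.
apply: is_cderive_eq (is_cderive_sum _ hs).
transitivity (\sum_(s : 'S_n) \sum_k (-1) ^+ s *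
    \prod_i (if i == k then G' i (s i) else G x i (s i))).
  by apply: eq_bigr => s _; rewrite mulr_sumr.
rewrite exchange_big; apply: eq_bigr => r _; rewrite /det_set_row /determinant.
apply: eq_bigr => s _; congr (_ * _); apply: eq_bigr => i _.
by rewrite !mxE /set_row; case: eqP => [->|_]; rewrite !mxE.
Qed.

Lemma cexpD (u v : C) : cexp (u + v) = cexp u * cexp v.
Proof.
case: u => u1 u2; case: v => v1 v2; rewrite /cexp /= expRD cosD sinD.
congr (_ +i* _); ring.
Qed.

End ComplexDerivative.

Section CasoratiSolution.
Variable R : realType.
Local Notation C := R[i].
Variables (N : nat) (a c : C) (ci di p q xi0 eta0 : 'I_N.+1 -> C).
Hypotheses (hp : forall i, p i != 0) (hq : forall i, q i != 0)
  (hap : forall i, 1 - a * p i != 0) (haq : forall i, 1 - a * q i != 0)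
  (hcp : forall i, 1 - c * p i != 0) (hcq : forall i, 1 - c * q i != 0).

Local Notation phi := (phi1 a c ci di p q xi0 eta0).
Local Notation tau := (tau1 a c ci di p q xi0 eta0).

Let unitf (z : C) : z != 0 -> z \is a GRing.unit. Proof. by rewrite unitfE. Qed.

Definition phi_rows (n m k : int) (x : R) : int -> 'rV[C]_N.+1 :=
  fun j => \row_i phi i (n + j) m k x.

Lemma tau1E n m k x : tau n m k x = casorati (phi_rows n m k x).
Proof. by rewrite /tau1 /casorati -det_tr; congr (\det _); apply/matrixP => j i; rewrite !mxE. Qed.

Lemma phi_rows_shift n d m k x j : phi_rows (n + d) m k x j = phi_rows n m k x (j + d).
Proof. by apply/rowP => i; rewrite !mxE -addrA [d + _]addrC. Qed.

Lemma phi1_k_step i n m k x :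
  phi i n m k x = phi i n m (k + 1) x - a * phi i (n + 1) m (k + 1) x.
Proof.
have expzS (u : C) : u != 0 -> u ^ (- k) = u ^ (- (k + 1)) * u.
  by move=> u0; rewrite -[in LHS](_ : - (k + 1) + 1 = - k) ?exprzDr ?expr1z ?unitf // opprD addrNK.
rewrite /phi1 (expzS _ (hap i)) (expzS _ (haq i)) !exprzDr ?unitf // !expr1z.
ring.
Qed.

Lemma phi1_m_step i n m k x :
  phi i n (m + 1) k x = phi i n m k x - c * phi i (n + 1) m k x.
Proof. by rewrite /phi1 !exprzDr ?unitf // !expr1z; ring. Qed.

Lemma is_cderive_phi1 i n m k x : is_cderive (phi i n m k) x (phi i (n - 1) m k x).
Proof.
apply: is_cderive_eq; last first.
  by apply: is_cderiveD; apply: is_cderiveM;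
    [apply: is_cderive_cst | apply: is_cderive_cexp | apply: is_cderive_cst | apply: is_cderive_cexp].
by rewrite /phi1 !exprzDr ?unitf // !exprN1; ring.
Qed.

(* Differentiating row [j] gives row [j - 1]; this repeats a row unless [j = 0]. *)
Lemma cderiv_tau1 n m k x : cderiv (tau n m k) x = casorati_low (phi_rows n m k x).
Proof.
set V := phi_rows n m k x.
apply: cderive_val.
apply: (is_cderive_ext (f := fun t => \det (mx_of_rows (fun j : 'I_N.+1 => phi_rows n m k t j))))
  => [t|]; first by rewrite tau1E.
apply: is_cderive_eq; last first.
  apply: (@is_cderive_det _ _ _ (mx_of_rows (fun j : 'I_N.+1 => V ((j : nat)%:Z - 1)))) => j i.
  apply: (is_cderive_ext (f := phi i (n + (j : nat)%:Z) m k)) => [t|]; first by rewrite !mxE.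
  by rewrite !mxE addrA; apply: is_cderive_phi1.
rewrite (bigD1 ord0) //= big1 ?addr0.
  congr (\det _); apply: eq_mx_of_rows => i; rewrite /set_row.
  by case: eqP => // _; rewrite row_mx_of_rows.
move=> r r0.
have r_gt0 : (0 < r)%N by rewrite lt0n -[(r : nat) == 0%N]/(r == ord0) r0.
pose r' : 'I_N.+1 := inord r.-1.
have r'_val : (r' : nat) = r.-1 by rewrite inordK // (leq_ltn_trans (leq_pred r)).
have r'_neq : r' != r by rewrite -val_eqE /= r'_val ltn_eqF // ltn_predL.
rewrite row_mx_of_rows.
have -> : V ((r : nat)%:Z - 1) = row r' (mx_of_rows (fun j : 'I_N.+1 => V (j : nat)%:Z)).
  by rewrite row_mx_of_rows r'_val -(prednK r_gt0) -natz_add1 addrK.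
exact: det_set_row_dup.
Qed.

Lemma tau1_bilinear : a != 0 -> c != 0 -> bilinear_pair a c tau.
Proof.
move=> a0 c0 n m k x; split.
  set U := phi_rows n m (k + 1) x.
  have hW j : phi_rows n m k x j = U j - a *: U (j + 1).
    by apply/rowP => i; rewrite !mxE phi1_k_step addrA.
  have -> : tau (n + 1) m (k + 1) x = casorati (fun j => U (j + 1)).
    by rewrite tau1E; congr (\det _); apply: eq_mx_of_rows => j; rewrite phi_rows_shift.
  have -> : tau (n - 1) m k x = casorati (fun j => U (j - 1) - a *: U (j - 1 + 1)).
    by rewrite tau1E; congr (\det _); apply: eq_mx_of_rows => j; rewrite -hW phi_rows_shift.
  rewrite /hirota !cderiv_tau1 !tau1E.
  rewrite (_ : phi_rows n m k x = fun j => U j - a *: U (j + 1)); last exact: funext.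
  exact: casorati_bilinear.
set U := phi_rows n m k x.
have hW j : phi_rows n (m + 1) k x j = U j - c *: U (j + 1).
  by apply/rowP => i; rewrite !mxE phi1_m_step addrA.
have -> : tau (n + 1) m k x = casorati (fun j => U (j + 1)).
  by rewrite tau1E; congr (\det _); apply: eq_mx_of_rows => j; rewrite phi_rows_shift.
have -> : tau (n - 1) (m + 1) k x = casorati (fun j => U (j - 1) - c *: U (j - 1 + 1)).
  by rewrite tau1E; congr (\det _); apply: eq_mx_of_rows => j; rewrite -hW phi_rows_shift.
rewrite /hirota !cderiv_tau1 !tau1E.
rewrite (_ : phi_rows n (m + 1) k x = fun j => U j - c *: U (j + 1)); last exact: funext.
exact: casorati_bilinear.
Qed.

End CasoratiSolution.

Section GramSolution.
Variable R : realType.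
Local Notation C := R[i].
Variables (N : nat) (a c : C) (cij : 'I_N -> 'I_N -> C) (p q xi0 eta0 : 'I_N -> C).
Hypotheses (hp : forall i, p i != 0) (hq : forall j, q j != 0)
  (hpq : forall i j, p i + q j != 0)
  (hap : forall i, 1 - a * p i != 0) (haq : forall j, 1 + a * q j != 0)
  (hcp : forall i, 1 - c * p i != 0) (hcq : forall j, 1 + c * q j != 0).

Local Notation tau := (tau2 a c cij p q xi0 eta0).

Let unitf (z : C) : z != 0 -> z \is a GRing.unit. Proof. by rewrite unitfE. Qed.
Let oppf_neq0 (z : C) : z != 0 -> - z != 0. Proof. by rewrite oppr_eq0. Qed.

(* The entry [(p i + q j)^-1 A_i B_j] of the Gram matrix, split into its row and column factors. *)
Definition gramA i (n m k : int) (x : R) : C :=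
  p i ^ n * (1 - c * p i) ^ m * (1 - a * p i) ^ (- k) * cexp ((p i)^-1 * x%:C + xi0 i).
Definition gramB j (n m k : int) (x : R) : C :=
  ((- q j)^-1) ^ n * ((1 + c * q j)^-1) ^ m * ((1 + a * q j)^-1) ^ (- k)
    * cexp ((q j)^-1 * x%:C + eta0 j).
Definition gram_mx n m k x : 'M[C]_N :=
  \matrix_(i, j) (cij i j + (p i + q j)^-1 * (gramA i n m k x * gramB j n m k x)).

Lemma tau2E n m k x : tau n m k x = \det (gram_mx n m k x).
Proof.
congr (\det _); apply/matrixP => i j; rewrite !mxE /gramA /gramB.
rewrite -mulrN -invrN exprzMl ?unitf ?invr_neq0 ?oppf_neq0 //.
by rewrite !exprzMl ?unitf ?invr_neq0 // cexpD; ring.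
Qed.

Lemma gramA_n i n m k x : gramA i (n + 1) m k x = p i * gramA i n m k x.
Proof. by rewrite /gramA exprzDr ?unitf // expr1z; ring. Qed.
Lemma gramA_nN i n m k x : gramA i (n - 1) m k x = (p i)^-1 * gramA i n m k x.
Proof. by rewrite /gramA exprzDr ?unitf // exprN1; ring. Qed.
Lemma gramA_m i n m k x : gramA i n (m + 1) k x = (1 - c * p i) * gramA i n m k x.
Proof. by rewrite /gramA exprzDr ?unitf // expr1z; ring. Qed.
Lemma gramA_k i n m k x : gramA i n m (k + 1) x = (1 - a * p i)^-1 * gramA i n m k x.
Proof. by rewrite /gramA opprD exprzDr ?unitf // exprN1; ring. Qed.
Lemma gramB_n j n m k x : gramB j (n + 1) m k x = (- q j)^-1 * gramB j n m k x.
Proof. by rewrite /gramB exprzDr ?unitf ?invr_neq0 ?oppf_neq0 // expr1z; ring. Qed.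
Lemma gramB_nN j n m k x : gramB j (n - 1) m k x = (- q j) * gramB j n m k x.
Proof. by rewrite /gramB exprzDr ?unitf ?invr_neq0 ?oppf_neq0 // exprN1 invrK; ring. Qed.
Lemma gramB_m j n m k x : gramB j n (m + 1) k x = (1 + c * q j)^-1 * gramB j n m k x.
Proof. by rewrite /gramB exprzDr ?unitf ?invr_neq0 // expr1z; ring. Qed.
Lemma gramB_k j n m k x : gramB j n m (k + 1) x = (1 + a * q j) * gramB j n m k x.
Proof. by rewrite /gramB opprD exprzDr ?unitf ?invr_neq0 // exprN1 invrK; ring. Qed.

Lemma is_cderive_gramA i n m k x :
  is_cderive (gramA i n m k) x ((p i)^-1 * gramA i n m k x).
Proof.
apply: is_cderive_eq (is_cderiveM (is_cderive_cst _ _) (is_cderive_cexp _ _ _)).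
by rewrite /gramA; ring.
Qed.
Lemma is_cderive_gramB j n m k x :
  is_cderive (gramB j n m k) x ((q j)^-1 * gramB j n m k x).
Proof.
apply: is_cderive_eq (is_cderiveM (is_cderive_cst _ _) (is_cderive_cexp _ _ _)).
by rewrite /gramB; ring.
Qed.

(* Since [(p i + q j)^-1 (p i^-1 + q j^-1) = (p i q j)^-1], the derivative of [gram_mx] has
   rank one, and Leibniz's formula collapses to a rank-one update of the determinant. *)
Lemma cderiv_tau2 n m k x :
  cderiv (tau n m k) x
  = \det (gram_mx n m k x + (\col_i ((p i)^-1 * gramA i n m k x))
                             *m (\row_j ((q j)^-1 * gramB j n m k x)))
    - \det (gram_mx n m k x).
Proof.
set u := \col_i ((p i)^-1 * gramA i n m k x).
set v := \row_j ((q j)^-1 * gramB j n m k x).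
apply: cderive_val.
apply: (is_cderive_ext (f := fun t => \det (gram_mx n m k t))) => [t|]; first by rewrite tau2E.
apply: is_cderive_eq (is_cderive_det (G' := u *m v) _); last first.
  move=> i j; apply: (is_cderive_ext (f := fun t =>
      cij i j + (p i + q j)^-1 * (gramA i n m k t * gramB j n m k t))) => [t|].
    by rewrite !mxE.
  apply: is_cderive_eq (is_cderiveD (is_cderive_cst _ _) (is_cderiveM (is_cderive_cst _ _)
    (is_cderiveM (is_cderive_gramA i n m k x) (is_cderive_gramB j n m k x)))).
  rewrite !mxE big_ord1 !mxE; field.
  by rewrite hpq hp hq.
rewrite det_add_rank1 addrAC subrr add0r; apply: eq_bigr => r _.
by rewrite -det_set_rowZ; congr (det_set_row _ _ _); apply/rowP => j; rewrite !mxE big_ord1 !mxE.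
Qed.

Lemma tau2_k_equation n m k x : a != 0 ->
  hirota a (tau n m (k + 1)) (tau n m k) x + tau (n + 1) m (k + 1) x * tau (n - 1) m k x = 0.
Proof.
move=> a0; set M := gram_mx n m k x.
set A := fun i => gramA i n m k x; set B := fun j => gramB j n m k x.
set u1 := \col_i ((1 - a * p i)^-1 * A i); set u2 := \col_i ((p i)^-1 * A i).
set b := \row_j B j; set d := \row_j ((q j)^-1 * B j).
have [E [P1 [P2 [S1 [S2 [Z [HQ Pl]]]]]]] := det_update2_pluecker M u1 u2 b d.
have upd (M' : 'M[C]_N) x1 x2 y1 y2 :
    (forall i j, M' i j = M i j + u1 i 0 * (x1 * b 0 j + x2 * d 0 j)
                         + u2 i 0 * (y1 * b 0 j + y2 * d 0 j)) ->
    \det M' = E - (y1 * P1 + y2 * P2) - (x1 * S1 + x2 * S2) + (x1 * y2 - x2 * y1) * Z.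
  by move=> /det_update2E ->; apply: HQ.
rewrite /hirota !cderiv_tau2 !tau2E.
rewrite (upd M 0 0 0 0); last by move=> i j; ring.
rewrite (upd (gram_mx n m (k + 1) x) a 0 0 0); last first.
  move=> i j; rewrite /M /u1 /u2 /b /d !mxE gramA_k gramB_k /A /B.
  by field; rewrite ?hq ?hp ?hap ?haq ?hpq ?a0.
rewrite (upd (gram_mx (n + 1) m (k + 1) x) 0 (-1) 0 0); last first.
  move=> i j; rewrite /M /u1 /u2 /b /d !mxE gramA_k gramB_k gramA_n gramB_n /A /B.
  by field; rewrite ?hq ?hp ?hap ?haq ?hpq ?a0.
rewrite (upd (gram_mx (n - 1) m k x) 0 0 (-1) 0); last first.
  move=> i j; rewrite /M /u1 /u2 /b /d !mxE gramA_nN gramB_nN /A /B.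
  by field; rewrite ?hq ?hp ?hap ?haq ?hpq ?a0.
rewrite (upd (M + u2 *m d) 0 0 0 1); last first.
  by move=> i j; rewrite /M /u1 /u2 /b /d !mxE ?big_ord1 !mxE /A /B; ring.
rewrite (upd (gram_mx n m (k + 1) x + (\col_i ((p i)^-1 * gramA i n m (k + 1) x))
                *m (\row_j ((q j)^-1 * gramB j n m (k + 1) x))) (a + a ^+ 2) a a 1); last first.
  move=> i j; rewrite /M /u1 /u2 /b /d !mxE ?big_ord1 !mxE !gramA_k !gramB_k /A /B.
  by field; rewrite ?hq ?hp ?hap ?haq ?hpq ?a0.
by rewrite -[RHS]Pl; field.
Qed.

Lemma tau2_m_equation n m k x : c != 0 ->
  hirota c (tau n m k) (tau n (m + 1) k) x + tau (n + 1) m k x * tau (n - 1) (m + 1) k x = 0.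
Proof.
move=> c0; set M := gram_mx n m k x.
set A := fun i => gramA i n m k x; set B := fun j => gramB j n m k x.
set u1 := \col_i A i; set u2 := \col_i ((p i)^-1 * A i).
set b := \row_j ((1 + c * q j)^-1 * B j); set d := \row_j ((q j)^-1 * B j).
have [E [P1 [P2 [S1 [S2 [Z [HQ Pl]]]]]]] := det_update2_pluecker M u1 u2 b d.
have upd (M' : 'M[C]_N) x1 x2 y1 y2 :
    (forall i j, M' i j = M i j + u1 i 0 * (x1 * b 0 j + x2 * d 0 j)
                         + u2 i 0 * (y1 * b 0 j + y2 * d 0 j)) ->
    \det M' = E - (y1 * P1 + y2 * P2) - (x1 * S1 + x2 * S2) + (x1 * y2 - x2 * y1) * Z.
  by move=> /det_update2E ->; apply: HQ.
rewrite /hirota !cderiv_tau2 !tau2E.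
rewrite (upd M 0 0 0 0); last by move=> i j; ring.
rewrite (upd (gram_mx n (m + 1) k x) (- c) 0 0 0); last first.
  move=> i j; rewrite /M /u1 /u2 /b /d !mxE gramA_m gramB_m /A /B.
  by field; rewrite ?hq ?hp ?hcp ?hcq ?hpq ?c0.
rewrite (upd (gram_mx (n + 1) m k x) 0 (-1) 0 0); last first.
  move=> i j; rewrite /M /u1 /u2 /b /d !mxE gramA_n gramB_n /A /B.
  by field; rewrite ?hq ?hp ?hcp ?hcq ?hpq ?c0.
rewrite (upd (gram_mx (n - 1) (m + 1) k x) 0 0 (-1) 0); last first.
  move=> i j; rewrite /M /u1 /u2 /b /d !mxE gramA_m gramB_m gramA_nN gramB_nN /A /B.
  by field; rewrite ?hq ?hp ?hcp ?hcq ?hpq ?c0.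
rewrite (upd (M + u2 *m d) 0 0 0 1); last first.
  by move=> i j; rewrite /M /u1 /u2 /b /d !mxE ?big_ord1 !mxE /A /B; ring.
rewrite (upd (gram_mx n (m + 1) k x + (\col_i ((p i)^-1 * gramA i n (m + 1) k x))
                *m (\row_j ((q j)^-1 * gramB j n (m + 1) k x))) (c ^+ 2 - c) (- c) (- c) 1); last first.
  move=> i j; rewrite /M /u1 /u2 /b /d !mxE ?big_ord1 !mxE !gramA_m !gramB_m /A /B.
  by field; rewrite ?hq ?hp ?hcp ?hcq ?hpq ?c0.
by rewrite -[RHS]Pl; field.
Qed.

End GramSolution.

Theorem lemma3 (R : realType) (N : nat) (a c : R[i]) :
  (0 < N)%N -> a != 0 -> c != 0 ->
  (forall (ci di p q xi0 eta0 : 'I_N -> R[i]),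
      (forall i, p i != 0) -> (forall i, q i != 0) ->
      (forall i, 1 - a * p i != 0) -> (forall i, 1 - a * q i != 0) ->
      (forall i, 1 - c * p i != 0) -> (forall i, 1 - c * q i != 0) ->
      bilinear_pair a c (tau1 a c ci di p q xi0 eta0))
  /\
  (forall (cij : 'I_N -> 'I_N -> R[i]) (p q xi0 eta0 : 'I_N -> R[i]),
      (forall i, p i != 0) -> (forall j, q j != 0) ->
      (forall i j, p i + q j != 0) ->
      (forall i, 1 - a * p i != 0) -> (forall j, 1 + a * q j != 0) ->
      (forall i, 1 - c * p i != 0) -> (forall j, 1 + c * q j != 0) ->
      bilinear_pair a c (tau2 a c cij p q xi0 eta0)).
Proof.
move=> N_gt0 a0 c0; split.
  case: N N_gt0 => [//|N] _ ci di p q xi0 eta0 hp hq hap haq hcp hcq.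
  exact: tau1_bilinear.
move=> cij p q xi0 eta0 hp hq hpq hap haq hcp hcq n m k x.
by split; [apply: tau2_k_equation | apply: tau2_m_equation].
Qed.
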